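(* Let $D$ be a rectangle whose upper and lower sides $P^1,P^2$ have length $a$ and whose left and right sides $Q^1,Q^2$ have length $b$. Then for every $k\in\mathbb{Z}_+$, $$\lambda_k^{Q^1Q^2}(D)\ \ge\ \frac{\pi^2}{b^2}\,M\!\left(\frac{b}{a}\,k\right),$$ where $M:[0,\infty)\to[0,\infty)$ is the inverse function of the strictly increasing continuous bijection $y\mapsto F(y)=\sum_{j=0}^{\infty}(y-j^2)_+^{1/2}$, $y\ge 0$, and $z_+=\max\{z,0\}$.
   Context: $\lambda_k^{Q^1Q^2}(D)$ denotes the $k$-th eigenvalue (with multiplicity, nondecreasing order) of $-\Delta$ on $D$ with Dirichlet condition on the left and right sides $Q^1,Q^2$ and Neumann condition on the upper and lower sides $P^1,P^2$. Its eigenvalues are $\pi^2(i^2/a^2+j^2/b^2)$, $i=1,2,\dots$, $j=0,1,2,\dots$. *)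

From HB Require Import structures.
From mathcomp Require Import all_boot all_order all_algebra.
From mathcomp Require Import all_classical all_reals all_analysis.
Set Implicit Arguments. Unset Strict Implicit. Unset Printing Implicit Defensive.
Import Order.TTheory GRing.Theory Num.Theory.
Local Open Scope classical_set_scope.
Local Open Scope ring_scope.

(* Eigenvalue pi^2 (i^2/a^2 + j^2/b^2) of the mixed Dirichlet(Q^1,Q^2)/Neumann(P^1,P^2)
   problem on the a x b rectangle, indexed by i >= 1, j >= 0. *)
Definition mixed_eig {R : realType} (a b : R) (i j : nat) : R :=
  pi ^+ 2 * ((i%:R) ^+ 2 / a ^+ 2 + (j%:R) ^+ 2 / b ^+ 2).

Local Close Scope ring_scope.
Definition mixed_count_upto {R : realType} (a b t : R) (n : nat) : nat :=
  \sum_(1 <= i < n.+1) \sum_(0 <= j < n.+1) nat_of_bool (mixed_eig a b i j <= t)%R.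

Local Open Scope ring_scope.
(* k-th eigenvalue, counted with multiplicity in nondecreasing order:
   the least t such that at least k eigenvalues are <= t. *)
Definition lambda_QQ {R : realType} (a b : R) (k : nat) : R :=
  inf [set t : R | exists n : nat, (k <= mixed_count_upto a b t n)%N].

Definition Fsum {R : realType} (y : R) : R :=
  limn (fun n : nat => \sum_(0 <= j < n) Num.sqrt (Num.max (y - (j%:R) ^+ 2) 0)).

Definition Minv {R : realType} (z : R) : R :=
  xget 0 [set y : R | 0 <= y /\ Fsum y = z].

From HB Require Import structures.
From mathcomp Require Import all_boot all_order all_algebra.
From mathcomp Require Import all_classical all_reals all_analysis.
From mathcomp Require Import ring zify.
Import Order.TTheory GRing.Theory Num.Theory.
Local Open Scope ring_scope.

(* For a fixed Neumann index j, the eigenvalues pi^2 (i^2/a^2 + j^2/b^2) <= t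
   number at most (a/b) (s - j^2)_+^(1/2) with s = t b^2 / pi^2.  Summing over j,
   k eigenvalues <= t force (b/a) k <= F(s), and as F is strictly increasing on
   [0, oo) its inverse satisfies M((b/a) k) <= s, i.e. the bound for every t
   above the k-th eigenvalue. *)

Section SqrtSum.
Context {R : realType}.

Definition Fterm (y : R) (j : nat) : R := Num.sqrt (Num.max (y - (j%:R) ^+ 2) 0).

Definition Fpart (y : R) (n : nat) : R := \sum_(0 <= j < n) Fterm y j.

Lemma Fterm_ge0 y j : 0 <= Fterm y j.
Proof. exact: sqrtr_ge0. Qed.

Lemma Fterm_eq0 y j : y <= (j%:R) ^+ 2 -> Fterm y j = 0.
Proof. by move=> hy; rewrite /Fterm max_r ?sqrtr0 // subr_le0. Qed.

Lemma Fterm_le s y j : s <= y -> Fterm s j <= Fterm y j.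
Proof.
by move=> hsy; rewrite ler_wsqrtr // ge_max le_max lerD2r hsy le_max lexx orbT.
Qed.

Lemma Fpart_le y m n : (m <= n)%N -> Fpart y m <= Fpart y n.
Proof.
move=> hmn; rewrite /Fpart (big_cat_nat (leq0n m) hmn) /= lerDl.
by apply: sumr_ge0 => j _; exact: Fterm_ge0.
Qed.

Lemma Fpart_lt s y n : 0 <= s -> s < y -> (0 < n)%N -> Fpart s n < Fpart y n.
Proof.
move=> hs hsy hn; rewrite /Fpart !(big_ltn hn).
apply: ltr_leD; last by apply: ler_sum => j _; exact: Fterm_le (ltW hsy).
rewrite /Fterm expr0n /= !subr0 !max_l ?(le_trans hs (ltW hsy)) //.
by rewrite ltr_sqrt // (le_lt_trans hs hsy).
Qed.

Lemma Fpart_gt0_ge0 y n : 0 < Fpart y n -> 0 <= y.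
Proof.
apply: contraLR; rewrite -ltNge -leNgt => hy.
rewrite /Fpart big1 // => j _; apply: Fterm_eq0.
exact: le_trans (ltW hy) (sqr_ge0 _).
Qed.

Lemma Fsum_Fpart y N : y <= N%:R -> Fsum y = Fpart y N.+1.
Proof.
move=> hy; apply: norm_lim_near_cst; near=> n.
have hn : (N.+1 <= n)%N by near: n; exact: nbhs_infty_ge.
rewrite /Fpart (big_cat_nat (leq0n N.+1) hn) /= [X in _ + X]big1_seq ?addr0 //.
move=> j /andP[_]; rewrite mem_index_iota => /andP[hNj _].
apply: Fterm_eq0; apply: le_trans hy _.
by rewrite -natrX ler_nat; nia.
Unshelve. all: end_near.
Qed.

Lemma Fpart_le_Fsum y n : 0 <= y -> Fpart y n <= Fsum y.
Proof.
move=> hy; pose N := maxn n (Num.Def.archi_bound y).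
rewrite (@Fsum_Fpart y N); last first.
  by apply: le_trans (ltW (archi_boundP hy)) _; rewrite ler_nat leq_maxr.
by apply: Fpart_le; rewrite leqW ?leq_maxl.
Qed.

Lemma Fsum_lt (s y : R) : 0 <= s -> s < y -> Fsum s < Fsum y.
Proof.
move=> hs hsy; have hy := le_trans hs (ltW hsy).
pose N := Num.Def.archi_bound y; have hyN : y <= N%:R := ltW (archi_boundP hy).
rewrite (Fsum_Fpart _ _ hyN) (Fsum_Fpart _ _ (le_trans (ltW hsy) hyN)).
exact: Fpart_lt.
Qed.

(* If z has no preimage, [Minv z] is the default value [0]. *)
Lemma Minv_le (z s : R) : 0 <= s -> z <= Fsum s -> Minv z <= s.
Proof.
move=> hs hz; rewrite /Minv.
case: (pselect (exists y, 0 <= y /\ Fsum y = z)) => [ex|nex]; last first.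
  by rewrite xgetPN // => y hy; apply: nex; exists y.
have [hy0 hFy] := xgetPex 0 ex; rewrite leNgt; apply/negP => hsy.
by move: (le_lt_trans hz (Fsum_lt _ _ hs hsy)); rewrite hFy ltxx.
Qed.

End SqrtSum.

Lemma count_pos_nat_le {R : realType} (X : R) m : 0 <= X ->
  (\sum_(1 <= i < m.+1) nat_of_bool (i%:R <= X)%R)%:R <= X.
Proof.
move=> hX; elim: m => [|m IH]; first by rewrite big_geq.
rewrite big_nat_recr //= natrD; have [hm|_] := leP (m.+1)%:R X; last by rewrite addr0.
apply: le_trans hm; rewrite -natrD ler_nat addn1 ltnS.
apply: (@leq_trans (\sum_(1 <= i < m.+1) 1)).
  by apply: leq_sum => i _; exact: leq_b1.
by rewrite sum_nat_const_nat subSS subn0 muln1.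
Qed.

Section MixedEigenvalues.
Context {R : realType} {a b : R}.
Hypotheses (ha : 0 < a) (hb : 0 < b).

Lemma mixed_eig_le i j m n :
  (i <= m)%N -> (j <= n)%N -> mixed_eig a b i j <= mixed_eig a b m n.
Proof.
move=> him hjn; rewrite /mixed_eig ler_wpM2l ?sqr_ge0 //.
by apply: lerD; rewrite ler_wpM2r ?invr_ge0 ?sqr_ge0 // -!natrX ler_nat leq_exp2r.
Qed.

Lemma mixed_count_upto_diag k : (k <= mixed_count_upto a b (mixed_eig a b k k) k)%N.
Proof.
apply: (@leq_trans (\sum_(1 <= i < k.+1) 1)).
  by rewrite sum_nat_const_nat subSS subn0 muln1.
rewrite big_nat_cond [leqRHS]big_nat_cond; apply: leq_sum => i /andP[/andP[_ hi] _].
by rewrite (big_ltn (ltn0Sn k)) mixed_eig_le.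
Qed.

Lemma mixed_eig_le_Fterm t i j : mixed_eig a b i j <= t ->
  i%:R <= a / b * Fterm (t * b ^+ 2 / pi ^+ 2) j.
Proof.
move=> hij; have hpi : pi != 0 :> R := lt0r_neq0 (pi_gt0 R).
set D := t * b ^+ 2 / pi ^+ 2 - (j%:R) ^+ 2.
have hab : 0 <= a / b by rewrite divr_ge0 ?ltW.
have hD : (i%:R) ^+ 2 <= (a / b) ^+ 2 * D.
  (* [pi] is abstracted before [field], which would otherwise unfold its definition. *)
  have -> : (a / b) ^+ 2 * D = (i%:R) ^+ 2 + a ^+ 2 / pi ^+ 2 * (t - mixed_eig a b i j).
    by rewrite /D /mixed_eig; move: (pi : R) hpi => p hp; field; rewrite hp !gt_eqF.
  by rewrite lerDl mulr_ge0 ?divr_ge0 ?sqr_ge0 ?subr_ge0.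
apply: (@le_trans _ _ (a / b * Num.sqrt D)); last first.
  by rewrite ler_wpM2l // ler_wsqrtr // le_max lexx.
rewrite -(ger0_norm hab) -sqrtr_sqr -sqrtrM ?sqr_ge0 //.
by rewrite -[i%:R]ger0_norm // -sqrtr_sqr ler_wsqrtr.
Qed.

Lemma mixed_count_upto_le_Fpart t n :
  (mixed_count_upto a b t n)%:R <= a / b * Fpart (t * b ^+ 2 / pi ^+ 2) n.+1.
Proof.
rewrite /mixed_count_upto exchange_big natr_sum /Fpart mulr_sumr.
apply: ler_sum => j _; set X := a / b * _.
have hX : 0 <= X by rewrite mulr_ge0 ?Fterm_ge0 // divr_ge0 ?ltW.
apply: le_trans (count_pos_nat_le _ n hX); rewrite ler_nat.
apply: leq_sum => i _; case hij: (mixed_eig a b i j <= t)%R => //=.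
by rewrite mixed_eig_le_Fterm.
Qed.

End MixedEigenvalues.

Theorem lemma3p2 (R : realType) (a b : R) (ha : 0 < a) (hb : 0 < b) (k : nat)
  (hk : (0 < k)%N) :
  pi ^+ 2 / b ^+ 2 * Minv (b / a * k%:R) <= lambda_QQ a b k.
Proof.
have hpi : pi != 0 :> R := lt0r_neq0 (pi_gt0 R).
apply: lb_le_inf.
  by exists (mixed_eig a b k k), k; exact: mixed_count_upto_diag.
move=> t [n hkn]; set s := t * b ^+ 2 / pi ^+ 2.
have hz : 0 < b / a * k%:R by rewrite mulr_gt0 ?divr_gt0 ?ltr0n.
have hzs : b / a * k%:R <= Fpart s n.+1.
  rewrite -ler_pdivlMl ?divr_gt0 // invf_div.
  by apply: le_trans (mixed_count_upto_le_Fpart ha hb t n); rewrite ler_nat.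
have hs : 0 <= s := Fpart_gt0_ge0 _ _ (lt_le_trans hz hzs).
have hM := Minv_le _ _ hs (le_trans hzs (Fpart_le_Fsum s n.+1 hs)).
have -> : t = pi ^+ 2 / b ^+ 2 * s.
  by rewrite /s; move: (pi : R) hpi => p hp; field; rewrite hp gt_eqF.
by rewrite ler_wpM2l ?divr_ge0 ?sqr_ge0.
Qed.
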